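(* Let $t\in\mathbb{N}$ and let $H$ be a graph whose vertex set is the union of pairwise disjoint sets $A$, $B$, $C$ such that: (1) $A$ and $B$ are independent sets, each of size $3t^2+t$; (2) $A$ and $B$ are complete to each other; (3) $|C|\ge 2$ and $H[C]$ is a path with endpoints $x$ and $y$; (4) both $x$ and $y$ have neighbours in $A\cup B$, and $C\setminus\{x,y\}$ is anticomplete to $A\cup B$; (5) $\deg_H(x)=2$; (6) $N(x)\cap(A\cup B)\neq N(y)\cap(A\cup B)$. Then $H\xrightarrow{\cap} tS_{t,t,t}$.
   Context: All graphs are finite and simple. For graphs $G_1=(V_1,E_1)$, $G_2=(V_2,E_2)$, $G_1\cap G_2=(V_1\cap V_2, E_1\cap E_2)$. For a graph $G=(V,E)$ and an injective map $\alpha$ on $V$, $G^{\alpha}$ has vertex set $\alpha(V)$ and edge set $\{\{\alpha(v),\alpha(w)\}: \{v,w\}\in E\}$. We write $G\xrightarrow{\cap} H$ if $H$ is (isomorphic to) $G^{\alpha_1}\cap\cdots\cap G^{\alpha_k}$ for some $k\ge1$ and injective maps $\alpha_1,\dots,\alpha_k$ on $V(G)$. For integers $a,b,c\ge1$, $S_{a,b,c}$ is the tree consisting of a vertex of degree $3$ together with three pendant paths having $a$, $b$, $c$ edges respectively; $tS_{t,t,t}$ is the disjoint union of $t$ copies of $S_{t,t,t}$. Sets are complete (anticomplete) to each other if all (no) edges between them are present. *)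

From mathcomp Require Import all_boot.
Set Implicit Arguments. Unset Strict Implicit. Unset Printing Implicit Defensive.

Definition simple_graph (V : finType) (h : rel V) : Prop :=
  (forall u v, h u v = h v u) /\ (forall v, ~~ h v v).

Definition cap_vertices (V U : finType) (k : nat) (alpha : 'I_k -> V -> U) : {set U} :=
  [set u | [forall i, u \in codom (alpha i)]].

Definition cap_edge (V U : finType) (h : rel V) (k : nat) (alpha : 'I_k -> V -> U) : rel U :=
  fun u w => [forall i, [exists v, [exists v', [&& alpha i v == u, alpha i v' == w & h v v']]]].

(* Vertices of t S_{t,t,t}: copy index c : 'I_t, and either the centre (None)
   or the vertex Some (j, p) at distance p+1 from the centre on leg j. *)
Definition tS_vertex (t : nat) : finType := ('I_t * option ('I_3 * 'I_t))%type.

Definition tS_edge (t : nat) : rel (tS_vertex t) :=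
  fun a b =>
    (a.1 == b.1) &&
    match a.2, b.2 with
    | None, Some (_, p) => val p == 0
    | Some (_, p), None => val p == 0
    | Some (j, p), Some (j', p') =>
        (j == j') && (((val p).+1 == val p') || ((val p').+1 == val p))
    | None, None => false
    end.

(* G -cap-> H0, where H0 is the graph (T, e): H0 is isomorphic to the
   intersection of k >= 1 injective images of G. *)
Definition cap_arrow (V : finType) (h : rel V) (T : finType) (e : rel T) : Prop :=
  exists (U : finType) (k : nat) (alpha : 'I_k -> V -> U),
    0 < k /\ (forall i, injective (alpha i)) /\
    exists f : T -> U,
      injective f /\
      (forall u, (u \in cap_vertices alpha) = (u \in codom f)) /\
      (forall a b, e a b = cap_edge h alpha (f a) (f b)).

Definition induced_path (V : finType) (h : rel V) (C : {set V}) (x y : V) : Prop :=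
  exists s : seq V,
    [/\ uniq s, (forall v, (v \in s) = (v \in C)),
        head y s = x, last x s = y &
        forall i j, i < size s -> j < size s ->
          h (nth x s i) (nth x s j) = (i.+1 == j) || (j.+1 == i)].

From mathcomp Require Import all_boot zify.
Set Implicit Arguments. Unset Strict Implicit. Unset Printing Implicit Defensive.

(* If every non-edge of a graph F is kept a non-edge by some injective
   homomorphism F -> H, then F is an intersection of copies of H.  So it suffices
   to map tS_{t,t,t} injectively and homomorphically into H in enough ways.
   For a vertex u on a leg, lay the path x = c_0, ..., c_m = y along the leg from u
   away from the centre, send the neighbour of u towards the centre to the
   neighbour a0 of x in A u B, the leg vertex just beyond the path to a neighbour
   b0 <> a0 of y in A u B (it exists by (6)), and 2-colour everything else into the
   complete bipartite graph between A and B, which has room since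
   |A| = |B| = 3t^2 + t = |V(tS_{t,t,t})|.  As deg x = 2, the image of u is adjacent
   only to the images of the two neighbours of u.  The remaining non-edges, between
   two centres, are kept by a 2-colouring into A u B with all centres in the
   independent set B. *)

Definition inj_hom (V T : finType) (h : rel V) (e : rel T) (g : T -> V) : Prop :=
  injective g /\ {homo g : a b / e a b >-> h a b}.

Section CapOfFamily.
Variables (V T I : finType) (h : rel V) (e : rel T) (g : I -> T -> V).
Hypothesis g_inj : forall i, injective (g i).

Local Notation U := (T + (bool * I) * V)%type.

(* Copy [j] renames [g j.2 a] to [inl a] and tags every other vertex with [j].
   Each [g i] is used twice, as [(true, i)] and [(false, i)], so that no tagged
   vertex survives the intersection. *)
Definition cap_copy (j : bool * I) (v : V) : U :=
  if [pick a | g j.2 a == v] is Some a then inl a else inr (j, v).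

Lemma cap_copy_g j a : cap_copy j (g j.2 a) = inl a.
Proof.
by rewrite /cap_copy; case: pickP => [a' /eqP/g_inj -> | /(_ a)]; rewrite ?eqxx.
Qed.

Lemma cap_copy_inl j v a : cap_copy j v = inl a -> v = g j.2 a.
Proof. by rewrite /cap_copy; case: pickP => [a' /eqP <- [->] | _]. Qed.

Lemma cap_copy_inr j v w : cap_copy j v = inr w -> w = (j, v).
Proof. by rewrite /cap_copy; case: pickP => [? _ | _ []]. Qed.

Lemma cap_copy_inj j : injective (cap_copy j).
Proof.
move=> v v'; case E: (cap_copy j v) => [a | w] E'.
  by rewrite (cap_copy_inl E) (cap_copy_inl (esym E')).
by have := cap_copy_inr (esym E'); rewrite (cap_copy_inr E) => -[].
Qed.

Local Notation copies := (fun i : 'I_#|{: bool * I}| => cap_copy (enum_val i)).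

Lemma cap_vertices_copies w : (w \in cap_vertices copies) = (w \in codom inl).
Proof.
case: w => [a | [j v]].
  rewrite codom_f inE; apply/forallP => i.
  by rewrite -(cap_copy_g (enum_val i) a) codom_f.
apply/idP/idP => [|/codomP [] //]; rewrite inE => /forallP /(_ (enum_rank (~~ j.1, j.2))).
case/codomP => w /esym /cap_copy_inr; rewrite enum_rankK.
by case: j => [[] ?] [].
Qed.

Lemma cap_edge_copies a b :
  cap_edge h copies (inl a) (inl b) = [forall i, h (g i a) (g i b)].
Proof.
apply/forallP/forallP => [H i | H i].
  have /existsP [v /existsP [v' /and3P [/eqP Ev /eqP Ev' hvv']]] := H (enum_rank (true, i)).
  by rewrite (cap_copy_inl Ev) (cap_copy_inl Ev') enum_rankK in hvv'.
apply/existsP; exists (g (enum_val i).2 a); apply/existsP; exists (g (enum_val i).2 b).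
by rewrite !cap_copy_g !eqxx H.
Qed.

Lemma cap_arrow_of_family (i0 : I) :
  (forall a b, e a b = [forall i, h (g i a) (g i b)]) -> cap_arrow h e.
Proof.
move=> eE; exists U, #|{: bool * I}|, copies; split.
  by apply/card_gt0P; exists (true, i0).
split; first by move=> i; apply: cap_copy_inj.
exists inl; split; first by move=> a b [].
split; first exact: cap_vertices_copies.
by move=> a b; rewrite cap_edge_copies.
Qed.

End CapOfFamily.

Lemma cap_arrow_of_homs (V T : finType) (h : rel V) (e : rel T) (g0 : T -> V) :
  inj_hom h e g0 ->
  (forall a b, ~~ e a b -> {g : T -> V | inj_hom h e g & ~~ h (g a) (g b)}) ->
  cap_arrow h e.
Proof.
move=> [g0_inj g0_hom] sep.
pose g (i : option {ab : T * T | ~~ e ab.1 ab.2}) :=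
  if i is Some ab then s2val (sep _ _ (valP ab)) else g0.
apply: (cap_arrow_of_family (g := g) _ None) => [[ab|] | a b] //=.
  by case: (s2valP (sep _ _ (valP ab))).
apply/idP/forallP => [eab [ab|] /= | H].
- by case: (s2valP (sep _ _ (valP ab))) => _; apply.
- exact: g0_hom.
- apply/negPn/negP => nab; apply/negP: (H (Some (exist _ (a, b) nab))).
  exact: (s2valP' (sep _ _ _)).
Qed.

Section InjectiveExtension.
Variables (T V : finType) (v0 : V).

Lemma set_injection (P : {set T}) (X : {set V}) : #|P| <= #|X| ->
  {f : T -> V | {in P &, injective f} /\ {in P, forall a, f a \in X}}.
Proof.
move=> PX; exists (fun a => nth v0 (enum X) (index a (enum P))).
have ltX a : a \in P -> index a (enum P) < size (enum X).
  by move=> Pa; rewrite -cardE (leq_trans _ PX) // cardE index_mem mem_enum.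
split=> [a b Pa Pb /eqP | a Pa]; last by rewrite -mem_enum mem_nth ?ltX.
rewrite nth_uniq ?ltX ?enum_uniq // => /eqP.
by apply: (index_inj a); rewrite mem_enum.
Qed.

Variables (fixed : T -> option V) (col : T -> bool) (X : bool -> {set V}).
Hypothesis fixed_inj : forall a b v, fixed a = Some v -> fixed b = Some v -> a = b.
Hypothesis fixed_out : forall a v cl, fixed a = Some v -> v \notin X cl.
Hypothesis X_disj : [disjoint X true & X false].

Definition free_class (cl : bool) : {set T} := [set a | (fixed a == None) && (col a == cl)].

Hypothesis free_card : forall cl, #|free_class cl| <= #|X cl|.

Lemma injective_extension : {g : T -> V |
  [/\ injective g, forall a v, fixed a = Some v -> g a = v
    & forall a, fixed a = None -> g a \in X (col a)]}.
Proof.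
pose f cl := sval (set_injection (free_card cl)).
have f_inj cl : {in free_class cl &, injective (f cl)}.
  exact: (proj2_sig (set_injection (free_card cl))).1.
have f_X cl : {in free_class cl, forall a, f cl a \in X cl}.
  exact: (proj2_sig (set_injection (free_card cl))).2.
have free a : fixed a = None -> a \in free_class (col a) by move=> Ea; rewrite inE Ea !eqxx.
exists (fun a => if fixed a is Some v then v else f (col a) a).
split=> [a b | a v -> // | a Ea]; last by rewrite Ea; apply: f_X; apply: free.
case Ea: (fixed a) => [va|]; case Eb: (fixed b) => [vb|].
- by move=> Evab; apply: fixed_inj Ea _; rewrite Eb Evab.
- by move=> Evab; have := f_X _ _ (free b Eb); rewrite -Evab (negbTE (fixed_out _ Ea)).
- by move=> Evab; have := f_X _ _ (free a Ea); rewrite Evab (negbTE (fixed_out _ Eb)).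
have Xa := f_X _ _ (free a Ea); have Xb := f_X _ _ (free b Eb).
have [Ecol Eab | Ncol Eab] := eqVneq (col a) (col b).
  by move: Eab; rewrite -Ecol; apply: f_inj (free a Ea) _; rewrite Ecol free.
move: Xa Xb Ncol; rewrite Eab; case: (col a); case: (col b) => // Xa Xb _.
  by rewrite (disjointFr X_disj Xa) in Xb.
by rewrite (disjointFr X_disj Xb) in Xa.
Qed.

End InjectiveExtension.

Section StarForest.
Variable t : nat.
Local Notation T := (tS_vertex t).

Lemma tS_edge_sym : symmetric (@tS_edge t).
Proof.
case=> [sa [[ja pa]|]] [sb [[jb pb]|]]; rewrite /tS_edge /= ?(eq_sym sa) //.
by rewrite (eq_sym ja) orbC.
Qed.

Definition tS_par (a : T) : bool := if a.2 is Some (_, q) then ~~ odd q else false.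

Lemma tS_edge_par a b : tS_edge a b -> tS_par a != tS_par b.
Proof.
case: a b => [sa [[ja pa]|]] [sb [[jb pb]|]]; rewrite /tS_edge /tS_par //=.
- by case/and3P=> _ _ /orP [] /eqP <-; rewrite oddS negbK; case: odd.
- by case/andP=> _ /eqP ->.
- by case/andP=> _ /eqP ->.
- by rewrite andbF.
Qed.

Lemma card_tS : #|T| = 3 * t ^ 2 + t.
Proof. rewrite card_prod card_option card_prod !card_ord; lia. Qed.

Section Leg.
Variables (s : 'I_t) (j : 'I_3) (p : 'I_t).

Definition leg_vertex : T := (s, Some (j, p)).

Definition leg_pred : T :=
  if p == 0 :> nat then (s, None)
  else (s, Some (j, Ordinal (leq_ltn_trans (leq_pred p) (ltn_ord p)))).

Definition ray (a : T) : option nat :=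
  if a is (s', Some (j', q)) then
    if [&& s' == s, j' == j & p <= q] then Some (q - p) else None
  else None.

Lemma ray_leg_vertex : ray leg_vertex = Some 0.
Proof. by rewrite /ray /leg_vertex !eqxx leqnn subnn. Qed.

Lemma ray_leg_pred : ray leg_pred = None.
Proof. by rewrite /leg_pred /ray; case: eqP => //= p0; rewrite !eqxx /= ifF //; lia. Qed.

Lemma leg_pred_neq : leg_pred != leg_vertex.
Proof. by apply/eqP => E; have := ray_leg_pred; rewrite E ray_leg_vertex. Qed.

Lemma rayP a k : ray a = Some k -> exists2 q : 'I_t, a = (s, Some (j, q)) & q = p + k :> nat.
Proof.
case: a => [s' [[j' q]|]] //=; case: and3P => // -[/eqP -> /eqP -> pq] [<-].
by exists q; rewrite // subnKC.
Qed.

Lemma ray_inj a b k : ray a = Some k -> ray b = Some k -> a = b.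
Proof.
move=> /rayP [qa -> Ea] /rayP [qb -> Eb].
by congr (_, Some (_, _)); apply: val_inj; rewrite /= Ea Eb.
Qed.

Lemma ray_edge a b k : tS_edge a b -> ray a = Some k ->
  [\/ ray b = Some k.+1, 0 < k /\ ray b = Some k.-1 | k = 0 /\ b = leg_pred].
Proof.
move=> + /rayP [qa Ea Eqa]; rewrite Ea; case: b => [sb [[jb qb]|]]; rewrite /tS_edge /=.
  case/and3P=> /eqP <- /eqP <- /orP [] /eqP Eqb; rewrite /ray !eqxx /=.
    by constructor 1; rewrite ifT; [congr Some |]; lia.
  have [pqb | qbp] := leqP p qb; first by constructor 2; split; [|congr Some]; lia.
  constructor 3; split; first lia.
  by rewrite /leg_pred ifF; [congr (_, Some (_, _)); apply: val_inj => /= | ]; lia.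
case/andP=> /eqP <- /eqP qa0; constructor 3; split; first lia.
by rewrite /leg_pred ifT //; lia.
Qed.

Lemma ray_step a b ka kb : tS_edge a b -> ray a = Some ka -> ray b = Some kb ->
  kb = ka.+1 \/ ka = kb.+1.
Proof.
move=> ab Ra Rb; case: (ray_edge ab Ra) => [|[ka_gt0]|[_ Eb]].
- by rewrite Rb => -[->]; left.
- by rewrite Rb => -[->]; right; rewrite prednK.
- by rewrite Eb ray_leg_pred in Rb.
Qed.

Lemma ray_exit a b k : tS_edge a b -> ray a = Some k -> ray b = None ->
  k = 0 /\ b = leg_pred.
Proof. by move=> ab Ra Rb; case: (ray_edge ab Ra) => [|[_]|//]; rewrite Rb. Qed.

Lemma edge_leg_pred : tS_edge leg_vertex leg_pred.
Proof.
rewrite /leg_pred; case: ifP => p0; rewrite /leg_vertex /tS_edge /= !eqxx //=.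
by rewrite prednK ?eqxx ?orbT //; lia.
Qed.

Lemma edge_leg_ray1 b : ray b = Some 1 -> tS_edge leg_vertex b.
Proof. by case/rayP=> q -> Eq; rewrite /leg_vertex /tS_edge /= !eqxx Eq addn1 eqxx. Qed.

End Leg.
End StarForest.

Section Embedding.
Variables (t : nat) (V : finType) (h : rel V) (A B : {set V}).
Variables (c : nat -> V) (m : nat) (a0 b0 : V).
Local Notation T := (tS_vertex t).

Hypothesis h_sym : symmetric h.
Hypothesis AB_disj : [disjoint A & B].
Hypothesis B_indep : forall b b', b \in B -> b' \in B -> ~~ h b b'.
Hypothesis AB_complete : forall a b, a \in A -> b \in B -> h a b.
Hypotheses (A_big : #|T| <= #|A|) (B_big : #|T| <= #|B|).
Hypothesis m_gt0 : 0 < m.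
Hypothesis c_inj : {in [pred k | k <= m] &, injective c}.
Hypothesis c_path : forall k, k < m -> h (c k) (c k.+1).
Hypothesis c_out : forall k, k <= m -> c k \notin A :|: B.
Hypotheses (a0_AB : a0 \in A :|: B) (b0_AB : b0 \in A :|: B) (a0_b0 : a0 != b0).
Hypotheses (c0_a0 : h (c 0) a0) (cm_b0 : h (c m) b0).
Hypothesis c0_nbr : forall v, h (c 0) v -> v = a0 \/ v = c 1.

Definition side (cl : bool) : {set V} := if cl then A else B.

Lemma side_disj : [disjoint side true & side false].
Proof. exact: AB_disj. Qed.

Lemma side_AB v cl : v \in side cl -> v \in A :|: B.
Proof. by case: cl; rewrite inE => ->; rewrite ?orbT. Qed.

Lemma side_mem v : v \in A :|: B -> v \in side (v \in A).
Proof. by rewrite inE /side; case: ifP. Qed.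

Lemma side_edge u v cu cv : u \in side cu -> v \in side cv -> cu != cv -> h u v.
Proof.
case: cu; case: cv => // Hu Hv _; first exact: AB_complete.
by rewrite h_sym; apply: AB_complete.
Qed.

Lemma path_neq_AB k v : k <= m -> v \in A :|: B -> c k != v.
Proof. by move=> km; apply: contraTneq => <-; apply: c_out. Qed.

Section LegCopy.
Variables (s : 'I_t) (j : 'I_3) (p : 'I_t).
Local Notation ray := (ray s j p).
Local Notation u := (leg_vertex s j p).
Local Notation pred := (leg_pred s j p).

Definition on_path (a : T) : bool := if ray a is Some k then k <= m else false.

Definition leg_fixed (a : T) : option V :=
  if ray a is Some k then
    if k <= m then Some (c k) else if k == m.+1 then Some b0 else None
  else if a == pred then Some a0 else None.

(* The free vertices are properly 2-coloured: beyond [b0] starting from the side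
   of [b0], elsewhere starting from the side of [a0]. *)
Definition leg_col (a : T) : bool :=
  if ray a is Some k then (b0 \in A) (+) odd (k - m.+1)
  else (a0 \in A) (+) tS_par a (+) tS_par pred.

Definition leg_room (cl : bool) : {set V} := side cl :\: [set a0; b0].

Lemma leg_fixed_ray a k v : ray a = Some k -> leg_fixed a = Some v ->
  (k <= m /\ v = c k) \/ (k = m.+1 /\ v = b0).
Proof.
rewrite /leg_fixed => ->; case: ifP => [km [<-] | _]; first by left.
by case: eqP => // -> [<-]; right.
Qed.

Lemma leg_fixed_off_ray a v : ray a = None -> leg_fixed a = Some v -> a = pred /\ v = a0.
Proof. by rewrite /leg_fixed => ->; case: eqP => // -> [<-]. Qed.

Lemma leg_fixed_inj a b v : leg_fixed a = Some v -> leg_fixed b = Some v -> a = b.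
Proof.
case Ra: (ray a) => [ka|]; case Rb: (ray b) => [kb|].
- move=> /(leg_fixed_ray Ra) Fa /(leg_fixed_ray Rb) Fb.
  suff Ek : ka = kb by apply: ray_inj Ra _; rewrite Rb Ek.
  case: Fa Fb => -[ka_m ->] [] [kb_m]; rewrite ?ka_m ?kb_m //.
  + exact: c_inj.
  + by move/eqP; rewrite (negbTE (path_neq_AB ka_m b0_AB)).
  + by move/esym/eqP; rewrite (negbTE (path_neq_AB kb_m b0_AB)).
- move=> /(leg_fixed_ray Ra) [] [ka_m ->] /(leg_fixed_off_ray Rb) [_ /eqP].
    by rewrite (negbTE (path_neq_AB ka_m a0_AB)).
  by rewrite eq_sym (negbTE a0_b0).
- move=> /(leg_fixed_off_ray Ra) [_ ->] /(leg_fixed_ray Rb) [] [kb_m /eqP].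
    by rewrite eq_sym (negbTE (path_neq_AB kb_m a0_AB)).
  by rewrite (negbTE a0_b0).
- by move=> /(leg_fixed_off_ray Ra) [-> _] /(leg_fixed_off_ray Rb) [-> _].
Qed.

Lemma leg_fixed_out a v cl : leg_fixed a = Some v -> v \notin leg_room cl.
Proof.
rewrite !inE; case Ra: (ray a) => [k|] Fa.
  case: (leg_fixed_ray Ra Fa) => [[km ->] | [_ ->]]; last by rewrite eqxx orbT.
  by apply/negP => /andP [_ /side_AB]; apply/negP/c_out.
by case: (leg_fixed_off_ray Ra Fa) => _ ->; rewrite eqxx.
Qed.

Lemma leg_room_disj : [disjoint leg_room true & leg_room false].
Proof. exact: disjointWl (subsetDl _ _) (disjointWr (subsetDl _ _) side_disj). Qed.

Lemma leg_free_card cl : #|free_class leg_fixed leg_col cl| <= #|leg_room cl|.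
Proof.
have fixed_u : leg_fixed u = Some (c 0) by rewrite /leg_fixed ray_leg_vertex.
have fixed_pred : leg_fixed pred = Some a0 by rewrite /leg_fixed ray_leg_pred eqxx.
have free_sub : free_class leg_fixed leg_col cl \subset ~: [set u; pred].
  apply/subsetP => a; rewrite !inE => /andP [/eqP Fa _].
  by apply/norP; split; apply/eqP => Ea; rewrite Ea ?fixed_u ?fixed_pred in Fa.
have room_big : #|T| <= #|side cl| by case: (cl).
have two_out : #|side cl :&: [set a0; b0]| <= 2.
  by apply: leq_trans (subset_leq_card (subsetIr _ _)) _; rewrite cards2 a0_b0.
have := cardsC [set u; pred]; rewrite cards2 eq_sym leg_pred_neq.
move: (subset_leq_card free_sub); rewrite /leg_room cardsD; lia.
Qed.

Definition leg_map : T -> V :=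
  sval (injective_extension (c 0) leg_fixed_inj leg_fixed_out leg_room_disj leg_free_card).

Lemma leg_mapP : [/\ injective leg_map,
  forall a v, leg_fixed a = Some v -> leg_map a = v
  & forall a, leg_fixed a = None -> leg_map a \in leg_room (leg_col a)].
Proof. by rewrite /leg_map; case: injective_extension. Qed.

Lemma leg_map_path a k : ray a = Some k -> k <= m -> leg_map a = c k.
Proof.
move=> Ra km; case: leg_mapP => _ fixedP _; apply: fixedP.
by rewrite /leg_fixed Ra km.
Qed.

Lemma leg_map_pred : leg_map pred = a0.
Proof.
case: leg_mapP => _ fixedP _; apply: fixedP.
by rewrite /leg_fixed ray_leg_pred eqxx.
Qed.

Lemma leg_map_end a : ray a = Some m.+1 -> leg_map a = b0.
Proof.
move=> Ra; case: leg_mapP => _ fixedP _; apply: fixedP.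
by rewrite /leg_fixed Ra ltnn eqxx.
Qed.

Lemma leg_map_side a : ~~ on_path a -> leg_map a \in side (leg_col a).
Proof.
rewrite /on_path => Pa; case: leg_mapP => _ _ free.
case Fa: (leg_fixed a) => [v|]; last by have := free a Fa; rewrite inE => /andP [].
move: Pa Fa; rewrite /leg_col; case Ra: (ray a) => [k|] Pa Fa.
  case: (leg_fixed_ray Ra Fa) => [[km] | [Ek _]]; first by rewrite km in Pa.
  by rewrite Ek in Ra *; rewrite leg_map_end // subnn addbF side_mem.
case: (leg_fixed_off_ray Ra Fa) => -> _.
by rewrite leg_map_pred -addbA addbb addbF side_mem.
Qed.

Lemma leg_col_edge a b : tS_edge a b -> ~~ on_path a -> ~~ on_path b ->
  leg_col a != leg_col b.
Proof.
rewrite /on_path /leg_col => ab.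
case Ra: (ray a) => [ka|]; case Rb: (ray b) => [kb|]; rewrite -?ltnNge => Pa Pb.
- case: (ray_step ab Ra Rb) => ->; rewrite subSn // oddS.
  + by case: (b0 \in A); case: odd.
  + by case: (b0 \in A); case: odd.
- by case: (ray_exit ab Ra Rb) => k0; rewrite k0 in Pa.
- have ba : tS_edge b a by rewrite tS_edge_sym.
  by case: (ray_exit ba Rb Ra) => k0; rewrite k0 in Pb.
- move: (tS_edge_par ab).
  by case: (a0 \in A); case: (tS_par a); case: (tS_par b); case: (tS_par pred).
Qed.

Lemma leg_map_hom_exit a b : tS_edge a b -> on_path a -> ~~ on_path b ->
  h (leg_map a) (leg_map b).
Proof.
rewrite /on_path => ab; case Ra: (ray a) => [ka|] // ka_m; case Rb: (ray b) => [kb|] Pb.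
  have [Eka Ekb] : ka = m /\ kb = m.+1 by case: (ray_step ab Ra Rb) => //; lia.
  by rewrite (leg_map_path Ra) // Eka; rewrite Ekb in Rb; rewrite (leg_map_end Rb).
case: (ray_exit ab Ra Rb) => k0 ->.
by rewrite (leg_map_path Ra) // k0 leg_map_pred.
Qed.

Lemma leg_map_hom a b : tS_edge a b -> h (leg_map a) (leg_map b).
Proof.
move=> ab; case Pa: (on_path a); case Pb: (on_path b).
- move: Pa Pb; rewrite /on_path.
  case Ra: (ray a) => [ka|] // ka_m; case Rb: (ray b) => [kb|] // kb_m.
  rewrite (leg_map_path Ra) // (leg_map_path Rb) //.
  by case: (ray_step ab Ra Rb) => E; [|rewrite h_sym]; rewrite E in kb_m ka_m *; apply: c_path.
- by apply: leg_map_hom_exit; rewrite ?Pb.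
- by rewrite h_sym; apply: leg_map_hom_exit; rewrite ?Pa // tS_edge_sym.
- by apply: side_edge (leg_map_side _) (leg_map_side _) (leg_col_edge _ _ _); rewrite ?Pa ?Pb.
Qed.

Lemma leg_map_nonedge b : ~~ tS_edge u b -> ~~ h (leg_map u) (leg_map b).
Proof.
rewrite (leg_map_path (ray_leg_vertex s j p)) //; apply: contra => /c0_nbr [] E.
  suff -> : b = pred by apply: edge_leg_pred.
  by case: leg_mapP => map_inj _ _; apply: map_inj; rewrite E leg_map_pred.
case Pb: (on_path b); last first.
  by have := leg_map_side (negbT Pb); rewrite E => /side_AB; rewrite (negbTE (c_out m_gt0)).
move: Pb; rewrite /on_path; case Rb: (ray b) => [k|] // km.
apply: edge_leg_ray1; rewrite Rb; congr Some.
by apply: c_inj; rewrite ?inE // -(leg_map_path Rb).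
Qed.

End LegCopy.

Lemma bip_free_card cl :
  #|free_class (fun _ : T => None : option V) (@tS_par t) cl| <= #|side cl|.
Proof. by rewrite (leq_trans (max_card _)) //; case: (cl). Qed.

Lemma bip_copy :
  {g : T -> V | inj_hom h (@tS_edge t) g & forall a, g a \in side (tS_par a)}.
Proof.
have [] // := injective_extension (c 0) _ _ side_disj bip_free_card.
move=> g [g_inj _ g_side]; exists g => [|a]; last exact: g_side.
by split=> // a b ab; apply: side_edge (g_side a _) (g_side b _) (tS_edge_par ab).
Qed.

Lemma tS_nonedge_copy a b : ~~ tS_edge a b ->
  {g : T -> V | inj_hom h (@tS_edge t) g & ~~ h (g a) (g b)}.
Proof.
have leg_inj_hom s j p : inj_hom h (@tS_edge t) (leg_map s j p).
  by split; [case: (leg_mapP s j p) | move=> ? ?; apply: leg_map_hom].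
case: a => sa [[ja pa]|] nab.
  by exists (leg_map sa ja pa); last exact: leg_map_nonedge.
case: b nab => sb [[jb pb]|] nab.
  exists (leg_map sb jb pb); rewrite // h_sym.
  by apply: leg_map_nonedge; rewrite tS_edge_sym.
case: bip_copy => g g_inj_hom g_side; exists g => //.
by apply: B_indep; [apply: (g_side (sa, None)) | apply: (g_side (sb, None))].
Qed.

Theorem tS_cap_arrow : cap_arrow h (@tS_edge t).
Proof.
by case: bip_copy => g g_inj_hom _; apply: cap_arrow_of_homs g_inj_hom tS_nonedge_copy.
Qed.

End Embedding.

Lemma induced_path_nth (V : finType) (h : rel V) (C : {set V}) x y :
  induced_path h C x y -> 2 <= #|C| ->
  exists2 m, 0 < m & exists c : nat -> V,
    [/\ c 0 = x /\ c m = y, {in [pred k | k <= m] &, injective c},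
        forall k, k < m -> h (c k) (c k.+1) & forall k, k <= m -> c k \in C].
Proof.
case=> ps [ps_uniq ps_C ps_head ps_last ps_adj] C2.
have size_ps : #|C| = size ps.
  by rewrite -(card_uniqP ps_uniq); apply: eq_card => v; rewrite -ps_C.
have [m size_m] : exists m, size ps = m.+1.
  by exists (size ps).-1; rewrite prednK // -size_ps (ltn_trans _ C2).
exists m; first by rewrite -ltnS -size_m -size_ps.
exists (nth x ps); split.
- by rewrite -[m]/(m.+1.-1) -size_m nth_last ps_last; case: (ps) ps_head.
- move=> i k; rewrite !inE => im km /eqP.
  by rewrite nth_uniq ?size_m ?ltnS // => /eqP.
- by move=> k km; rewrite ps_adj ?size_m ?eqxx // ltnS ltnW.
- by move=> k km; rewrite -ps_C mem_nth // size_m ltnS.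
Qed.

Lemma card2_nbr (V : finType) (h : rel V) x a b :
  #|[set v | h x v]| = 2 -> h x a -> h x b -> a != b ->
  forall v, h x v -> v = a \/ v = b.
Proof.
move=> deg2 xa xb ab v xv.
have : [set a; b] == [set v | h x v].
  rewrite eqEcard deg2 cards2 ab leqnn andbT.
  by apply/subsetP => w; rewrite !inE => /orP [] /eqP ->.
by move/eqP/setP/(_ v); rewrite !inE xv => /orP [] /eqP; [left | right].
Qed.

Lemma other_nbr (V : finType) (h : rel V) (S : {set V}) x y a0 :
  (forall v, v \in S -> h x v -> v = a0) -> a0 \in S -> h x a0 ->
  (exists2 w, w \in S & h y w) ->
  [set v in S | h x v] != [set v in S | h y v] ->
  exists b0, [/\ b0 \in S, h y b0 & a0 != b0].
Proof.
move=> x_nbr a0_S x_a0 [w w_S y_w] N_neq.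
have [b0 /and3P [] | no_b0] := pickP [pred b0 | [&& b0 \in S, h y b0 & a0 != b0]].
  by exists b0.
have y_nbr v : v \in S -> h y v -> v = a0.
  by move=> vS yv; apply/eqP; rewrite eq_sym; move: (no_b0 v); rewrite /= vS yv => /negbFE.
case/negP: N_neq; apply/eqP/setP => v; rewrite !inE; apply/andb_id2l => vS.
apply/idP/idP => [/(x_nbr v vS) | /(y_nbr v vS)] ->; rewrite ?x_a0 //.
by rewrite -(y_nbr w w_S y_w).
Qed.

Theorem mainTheorem4 (t : nat) (V : finType) (h : rel V) (A B C : {set V}) (x y : V) :
  simple_graph h ->
  [disjoint A & B] -> [disjoint A & C] -> [disjoint B & C] ->
  A :|: B :|: C = [set: V] ->
  (* (1) *)
  (forall a a', a \in A -> a' \in A -> ~~ h a a') ->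
  (forall b b', b \in B -> b' \in B -> ~~ h b b') ->
  #|A| = 3 * t ^ 2 + t -> #|B| = 3 * t ^ 2 + t ->
  (* (2) *)
  (forall a b, a \in A -> b \in B -> h a b) ->
  (* (3) *)
  2 <= #|C| -> induced_path h C x y ->
  (* (4) *)
  (exists2 v, v \in A :|: B & h x v) ->
  (exists2 v, v \in A :|: B & h y v) ->
  (forall c v, c \in C :\: [set x; y] -> v \in A :|: B -> ~~ h c v) ->
  (* (5) *)
  #|[set v | h x v]| = 2 ->
  (* (6) *)
  [set v in A :|: B | h x v] != [set v in A :|: B | h y v] ->
  cap_arrow h (@tS_edge t).
Proof.
move=> [h_sym _] AB_disj AC_disj BC_disj _ _ B_indep A_card B_card AB_complete C2 path_C
  [a0 a0_AB x_a0] y_nbr _ deg_x N_neq.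
have [m m_gt0 [c [[c0 cm] c_inj c_path c_C]]] := induced_path_nth path_C C2.
have c_out k : k <= m -> c k \notin A :|: B.
  by move/c_C => cC; rewrite inE (disjointFl AC_disj cC) (disjointFl BC_disj cC).
have a0_c1 : a0 != c 1 by apply: contraTneq a0_AB => ->; apply: c_out.
have x_nbr v : h x v -> v = a0 \/ v = c 1.
  by apply: card2_nbr; rewrite // -c0 c_path.
have x_nbr_AB v : v \in A :|: B -> h x v -> v = a0.
  by move=> vAB /x_nbr [// | E]; rewrite E (negbTE (c_out _ m_gt0)) in vAB.
have [b0 [b0_AB y_b0 a0_b0]] := other_nbr x_nbr_AB a0_AB x_a0 y_nbr N_neq.
subst x y.
apply: (tS_cap_arrow (A := A) (B := B) (c := c) (m := m) (a0 := a0) (b0 := b0)) => //.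
  by rewrite card_tS A_card.
by rewrite card_tS B_card.
Qed.
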